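(* Let $\bar{\mathcal{G}}=(\bar{\mathcal{V}},\bar{\mathcal{E}})$ be the edge localization graph of the communication graph $\mathcal{G}$ (as defined in the context), and let $L(\bar{\mathcal{G}})$ be its directed line graph. Then for every edge $e\in\bar{\mathcal{E}}$, \[ \kappa\bigl(L(\bar{\mathcal{G}}),e\bigr)\;\ge\;\kappa\bigl(\bar{\mathcal{G}},t(e)\bigr). \]
   Context: Setting. There are $N$ agents $\mathcal{V}=\{1,\dots,N\}$ in the plane. A set $\mathcal{S}$ of subtended angle measurements is given: an element $\alpha^{u}_{wv}\in\mathcal{S}$ (with $u,v,w$ distinct agents) is the counterclockwise angle in $[-\pi,\pi)$ measured at agent $u$ from the direction of agent $v$ to the direction of agent $w$; $\alpha^{u}_{wv}\in\mathcal{S}$ if and only if $\alpha^{u}_{vw}=-\alpha^{u}_{wv}\in\mathcal{S}$. The communication graph $\mathcal{G}=(\mathcal{V},\mathcal{E})$ is the directed graph whose edges are exactly the ordered pairs $(u,v),(v,u),(u,w),(w,u)$ for all $\alpha^{u}_{wv}\in\mathcal{S}$; it is symmetric and is assumed connected. Edge localization graph. For each edge $(u,v)\in\mathcal{E}$ such that there is no $w$ with $\alpha^{v}_{wu}\in\mathcal{S}$, introduce a new virtual vertex $\bar v^{u}$ (distinct for distinct such pairs $(u,v)$; it is co-located with agent $v$). Let $\mathcal{E}^{u}=\{(u,\bar v^{u}),(\bar v^{u},u) : (u,v)\in\mathcal{E},\ \nexists w \text{ with } \alpha^{v}_{wu}\in\mathcal{S}\}$ and $\mathcal{V}^{u}$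 the set of all these virtual vertices. Then $\bar{\mathcal{V}}=\bigl(\mathcal{V}\setminus\{u\in\mathcal{V}: \text{no } \alpha^{u}_{wv}\in\mathcal{S} \text{ for any } v,w\}\bigr)\cup\mathcal{V}^{u}$ and $\bar{\mathcal{E}}=\bigl(\mathcal{E}\setminus\{(u,v),(v,u): (u,v)\in\mathcal{E},\ \nexists w \text{ with }\alpha^{v}_{wu}\in\mathcal{S}\}\bigr)\cup\mathcal{E}^{u}$. For a directed edge $e=(u,v)$, $t(e)=u$ is its tail and $h(e)=v$ its head. The directed line graph $L(\mathcal{H})$ of a directed graph $\mathcal{H}=(V,E)$ has vertex set $E$ and a directed edge $(e_1,e_2)$ for every pair $e_1,e_2\in E$ with $h(e_1)=t(e_2)$. An oriented spanning tree of a directed graph with root $r$ is an acyclic subgraph containing all vertices in which every vertex other than $r$ has a directed path to $r$. $\kappa(\mathcal{H},r)$ denotes the number of oriented spanning trees of $\mathcal{H}$ rooted at $r$. *)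

From mathcomp Require Import all_boot.
Set Implicit Arguments. Unset Strict Implicit. Unset Printing Implicit Defensive.

Section Digraphs.
Variable V : finType.

Definition edge_rel (F : {set V * V}) : rel V := fun a b => (a, b) \in F.

Definition is_ost (Vs : {set V}) (E : {set V * V}) (r : V) (F : {set V * V}) :=
  [&& r \in Vs, F \subset E,
      [forall x in Vs,
         #|[set y | (x, y) \in F]| == (if x == r then 0 else 1)] &
      [forall x in Vs, connect (edge_rel F) x r]].

Definition kappa (Vs : {set V}) (E : {set V * V}) (r : V) : nat :=
  #|[set F : {set V * V} | is_ost Vs E r F]|.

Definition tail (e : V * V) : V := e.1.
Definition head (e : V * V) : V := e.2.

Definition line_edges (E : {set V * V}) : {set (V * V) * (V * V)} :=
  [set p | [&& p.1 \in E, p.2 \in E & head p.1 == tail p.2]].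

End Digraphs.

(* Agents are 'I_N.  A measurement alpha^u_{wv} is encoded by the triple
   ((u, w), v) : 'I_N * 'I_N * 'I_N; S is the set of present measurements. *)
Definition meas N := ('I_N * 'I_N * 'I_N)%type.

Definition comm_edges N (S : {set meas N}) : {set 'I_N * 'I_N} :=
  [set e | [exists t in S,
     [|| e == (t.1.1, t.2), e == (t.2, t.1.1),
         e == (t.1.1, t.1.2) | e == (t.1.2, t.1.1)]]].

Definition has_meas N (S : {set meas N}) (u : 'I_N) :=
  [exists t in S, t.1.1 == u].

(* (u,v) in E and there is no w with alpha^v_{wu} in S: needs a virtual
   vertex \bar v^u *)
Definition lonely N (S : {set meas N}) (u v : 'I_N) :=
  ((u, v) \in comm_edges S) && ~~ [exists w, ((v, w), u) \in S].

(* vertices of the edge localization graph: agents (inl u) and virtual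
   vertices inr (u, v) standing for \bar v^u *)
Definition ELvert N := ('I_N + ('I_N * 'I_N))%type.

Definition el_vertices N (S : {set meas N}) : {set ELvert N} :=
  [set x | match x with
           | inl u => has_meas S u
           | inr p => lonely S p.1 p.2
           end].

Definition el_edges N (S : {set meas N}) : {set ELvert N * ELvert N} :=
  [set e | match e with
           | (inl u, inl v) =>
               [&& (u, v) \in comm_edges S, ~~ lonely S u v & ~~ lonely S v u]
           | (inl u, inr p) => (p.1 == u) && lonely S p.1 p.2
           | (inr p, inl u) => (p.1 == u) && lonely S p.1 p.2
           | (inr _, inr _) => false
           end].

From Pilot Require Import Defs.
From mathcomp Require Import all_boot.
Set Implicit Arguments. Unset Strict Implicit. Unset Printing Implicit Defensive.

(* Let e = (r, x). An oriented spanning tree F of a symmetric digraph rooted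
   at r yields one of the line graph rooted at e: every edge f <> e points to
   the tree edge leaving the head of f, or to e when the head of f is r.
   Following f backwards along the tree path from its head to r shows that
   this is a spanning tree. The map is injective: the tree edge (a, b)
   leaving a non-root vertex a is the successor of the reverse edge (b, a),
   unless (b, a) = e, in which case b is the tail of e anyway. *)

Section OrientedSpanningTrees.
Variables (V : finType) (Vs : {set V}) (E : {set V * V}) (r : V).

Definition tree_succ (F : {set V * V}) (v : V) : V :=
  odflt v [pick y | (v, y) \in F].

Variable F : {set V * V}.
Hypothesis ostF : is_ost Vs E r F.

Lemma ost_sub : {subset F <= E}.
Proof. by case/and4P: ostF => _ /subsetP. Qed.

Lemma ost_connect v : v \in Vs -> connect (edge_rel F) v r.
Proof. by case/and4P: ostF => _ _ _ /forall_inP; apply. Qed.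

Lemma ost_out v : v \in Vs ->
  [set y | (v, y) \in F] = if v == r then set0 else [set tree_succ F v].
Proof.
case/and4P: ostF => _ _ /forall_inP/(_ v) outdeg _ /outdeg.
case: (v == r); first by rewrite cards_eq0 => /eqP.
case/cards1P=> y outF; rewrite outF /tree_succ.
case: pickP => [z zF | noF] /=.
  by have /set1P-> : z \in [set y] by rewrite -outF inE.
by have := set11 y; rewrite -outF inE noF.
Qed.

Lemma ost_edgeE v y : v \in Vs ->
  ((v, y) \in F) = (v != r) && (y == tree_succ F v).
Proof.
move=> vVs; have := ost_out vVs => /setP/(_ y).
by rewrite inE => ->; case: (v == r); rewrite ?inE.
Qed.

End OrientedSpanningTrees.

Section LineGraphTrees.
Variables (V : finType) (Vs : {set V}) (E : {set V * V}) (e : V * V).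
Hypothesis E_sym : forall a b, (a, b) \in E -> (b, a) \in E.
Hypothesis E_tail : forall f, f \in E -> tail f \in Vs.
Hypothesis eE : e \in E.

Local Notation r := (tail e).
Local Notation ost := (is_ost Vs E r).

Lemma E_head f : f \in E -> Defs.head f \in Vs.
Proof. by case: f => a b /E_sym/E_tail. Qed.

Lemma ost_tree_succ F v : ost F -> v \in Vs -> v != r ->
  (v, tree_succ F v) \in F.
Proof. by move=> ostF vVs vr; rewrite (ost_edgeE ostF) // vr eqxx. Qed.

Lemma ost_eq F1 F2 : ost F1 -> ost F2 ->
  {in Vs, forall v, v != r -> tree_succ F1 v = tree_succ F2 v} -> F1 = F2.
Proof.
move=> ost1 ost2 succ12; apply/setP=> -[v y].
have [vVs | vNVs] := boolP (v \in Vs).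
  rewrite (ost_edgeE ost1) ?(ost_edgeE ost2) //; have [//|vr] := eqVneq v r.
  by rewrite succ12.
have notin G : ost G -> (v, y) \notin G.
  by move=> ostG; apply: contra vNVs => /(ost_sub ostG)/E_tail.
by rewrite (negbTE (notin _ ost1)) (negbTE (notin _ ost2)).
Qed.

Definition line_succ (F : {set V * V}) (f : V * V) : V * V :=
  if Defs.head f == r then e else (Defs.head f, tree_succ F (Defs.head f)).

Definition line_tree (F : {set V * V}) : {set (V * V) * (V * V)} :=
  [set p | [&& p.1 \in E, p.1 != e & p.2 == line_succ F p.1]].

Lemma line_treeE F f g :
  ((f, g) \in line_tree F) = [&& f \in E, f != e & g == line_succ F f].
Proof. by rewrite inE. Qed.

Lemma line_succ_edge F f : ost F -> f \in E ->
  (f, line_succ F f) \in line_edges E.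
Proof.
move=> ostF fE; rewrite inE /= fE /line_succ.
case: ifP => [/eqP-> | hr]; first by rewrite eE eqxx.
by rewrite (ost_sub ostF) ?ost_tree_succ ?E_head ?hr ?eqxx.
Qed.

Lemma line_tree_connect F : ost F ->
  forall f, f \in E -> connect (edge_rel (line_tree F)) f e.
Proof.
move=> ostF f fE; have /connectP[p] := ost_connect ostF (E_head fE).
elim: p f fE => [|y p IHp] f fE /=.
  move=> _ head_r; have [-> // | fe] := eqVneq f e.
  by apply: connect1; rewrite /edge_rel line_treeE fE fe /line_succ -head_r !eqxx.
case/andP=> hyF yp last_r; have [-> // | fe] := eqVneq f e.
have /andP[hr /eqP yE] : (Defs.head f != r) && (y == tree_succ F (Defs.head f)).
  by rewrite -(ost_edgeE ostF) ?E_head.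
apply: (@connect_trans _ _ (Defs.head f, y)).
  apply: connect1.
  by rewrite /edge_rel line_treeE fE fe /line_succ (negbTE hr) yE eqxx.
by apply: (IHp (Defs.head f, y)) yp last_r; apply: (ost_sub ostF).
Qed.

Lemma line_tree_ost F : ost F -> is_ost E (line_edges E) e (line_tree F).
Proof.
move=> ostF; apply/and4P; split=> //.
- apply/subsetP=> -[f g]; rewrite line_treeE => /and3P[fE _ /eqP->].
  exact: line_succ_edge.
- apply/forall_inP=> f fE; have [-> | fe] := eqVneq f e.
    by rewrite cards_eq0; apply/eqP/setP=> g; rewrite !inE eqxx andbF.
  apply/cards1P; exists (line_succ F f); apply/setP=> g.
  by rewrite inE line_treeE fE fe in_set1.
- by apply/forall_inP; apply: line_tree_connect.
Qed.

Lemma line_tree_inj F1 F2 : ost F1 -> ost F2 ->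
  line_tree F1 = line_tree F2 -> F1 = F2.
Proof.
move=> ost1 ost2 eq12; apply: ost_eq => // a aVs ar.
have succ12 f : f \in E -> f != e -> line_succ F1 f = line_succ F2 f.
  move=> fE fe; have : (f, line_succ F1 f) \in line_tree F2.
    by rewrite -eq12 line_treeE fE fe eqxx.
  by rewrite line_treeE => /and3P[_ _ /eqP].
have from_rev G : ost G -> (tree_succ G a, a) \in E.
  by move=> ostG; apply/E_sym/(ost_sub ostG)/ost_tree_succ.
have via_rev b : (b, a) \in E -> (b, a) != e -> tree_succ F1 a = tree_succ F2 a.
  by move=> baE bae; have := succ12 _ baE bae; rewrite /line_succ /= (negbTE ar) => -[].
have [rev1 | /(via_rev _ (from_rev _ ost1))//] := eqVneq (tree_succ F1 a, a) e.
have [rev2 | /(via_rev _ (from_rev _ ost2))//] := eqVneq (tree_succ F2 a, a) e.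
by have := congr1 fst (etrans rev1 (esym rev2)).
Qed.

Theorem kappa_line_graph_ge : kappa Vs E r <= kappa E (line_edges E) e.
Proof.
rewrite /kappa -(@card_in_imset _ _ line_tree); last first.
  by move=> F1 F2; rewrite !inE; apply: line_tree_inj.
apply/subset_leq_card/subsetP=> _ /imsetP[F + ->]; rewrite !inE.
exact: line_tree_ost.
Qed.

End LineGraphTrees.

Section EdgeLocalizationGraph.
Variables (N : nat) (S : {set meas N}).
Hypothesis Hsym : forall u w v : 'I_N, (((u, w), v) \in S) = (((u, v), w) \in S).

Lemma comm_edges_sym u v : (u, v) \in comm_edges S -> (v, u) \in comm_edges S.
Proof.
rewrite !inE => /existsP[t /andP[tS uv]]; apply/existsP; exists t; rewrite tS.
by move: uv; rewrite !xpair_eqE => /or4P[] /andP[/eqP-> /eqP->]; rewrite !eqxx ?orbT.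
Qed.

Lemma in_el_edges a b : ((a, b) \in el_edges S) =
  match a, b with
  | inl u, inl v => [&& (u, v) \in comm_edges S, ~~ lonely S u v & ~~ lonely S v u]
  | inl u, inr p | inr p, inl u => (p.1 == u) && lonely S p.1 p.2
  | inr _, inr _ => false
  end.
Proof. by rewrite /el_edges in_set. Qed.

Lemma el_edges_sym a b : (a, b) \in el_edges S -> (b, a) \in el_edges S.
Proof.
case: a b => [u|p] [v|q]; rewrite !in_el_edges //.
by case/and3P=> /comm_edges_sym-> -> ->.
Qed.

Lemma lonely_has_meas u v : lonely S u v -> has_meas S u.
Proof.
case/andP; rewrite inE => /existsP[[[a b] c] /andP[abcS uv]] /existsP noW.
apply/existsP; move: uv; rewrite !xpair_eqE => /or4P[] /andP[/eqP eu /eqP ev]; subst.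
- by exists ((a, b), c); rewrite abcS eqxx.
- by case: noW; exists b.
- by exists ((a, b), c); rewrite abcS eqxx.
- by case: noW; exists c; rewrite Hsym.
Qed.

Lemma el_edges_tail f : f \in el_edges S -> tail f \in el_vertices S.
Proof.
case: f => [[u|p] [v|q]]; rewrite in_el_edges // => f_el; rewrite inE /=.
- case/and3P: f_el => /comm_edges_sym vu _; rewrite /lonely vu negbK.
  by case/existsP=> w wS; apply/existsP; exists ((u, w), v); rewrite wS eqxx.
- by case/andP: f_el => /eqP<-; apply: lonely_has_meas.
- by case/andP: f_el.
Qed.

End EdgeLocalizationGraph.

Theorem corollary1 (N : nat) (S : {set meas N})
  (Hdistinct : forall u w v : 'I_N, ((u, w), v) \in S ->
                 [&& u != w, u != v & w != v])
  (Hsym : forall u w v : 'I_N, (((u, w), v) \in S) = (((u, v), w) \in S))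
  (Hconn : forall u v : 'I_N, connect (edge_rel (comm_edges S)) u v) :
  forall e, e \in el_edges S ->
    kappa (el_edges S) (line_edges (el_edges S)) e
    >= kappa (el_vertices S) (el_edges S) (tail e).
Proof.
move=> e eE; apply: kappa_line_graph_ge eE.
- exact: el_edges_sym.
- exact: el_edges_tail.
Qed.
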